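(* For every Euler–Venn diagram $d$ and all finite multisets $\Gamma,\Delta$ of compound diagrams, the following rules are sound (validity of all premisses implies validity of the conclusion): $(\mathrm{det}L)$ from $d,\Gamma\Rightarrow E(d)$ and $V(d),\Gamma\Rightarrow\Delta$ infer $d,\Gamma\Rightarrow\Delta$; $(\mathrm{det}R)$ from $E(d),\Gamma\Rightarrow V(d)$ infer $\Gamma\Rightarrow\Delta,d$.
   Context: Fix a countably infinite set $\mathcal V$ of propositional variables. A Heyting algebra $(H,\vee,\wedge,\to,0,1)$ is a bounded distributive lattice with a binary operation $\to$ such that $c\wedge a\le b\iff c\le a\to b$; $-a:=a\to0$; empty meets are $1$, empty joins $0$. A valuation is a map $v:\mathcal V\to H$. For a finite $L\subset\mathcal V$, a zone over $L$ is a pair $z=(\mathrm{in}(z),\mathrm{out}(z))$ of disjoint subsets of $L$ with union $L$; $\mathcal Z(L)$ is the set of all zones over $L$; $v(z)=\bigwedge_{c\in\mathrm{in}(z)}v(c)\wedge\bigwedge_{c\in\mathrm{out}(z)}-v(c)$ and $m_v(z)=\big(\bigwedge_{c\in\mathrm{in}(z)}v(c)\big)\to\big(\bigvee_{c\in\mathrm{out}(z)}v(c)\big)$. Unitary diagrams are of three kinds: Venn diagrams $d=(L,\mathcal Z(L),S)$, $S\subseteq\mathcal Z(L)$ shaded, $[\![d]\!]_v=\bigvee_{z\in S}v(z)$; pure Euler diagrams $d=(L,Z)$, $Z\subseteq\mathcal Z(L)$ visible zones, missing zones $M(d)=\mathcal Z(L)\setminus Z$, $[\![d]\!]_v=\bigwedge_{z\in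 M(d)}m_v(z)$; Euler–Venn diagrams $d=(L,Z,S)$ with $S\subseteq Z\subseteq\mathcal Z(L)$, with associated pure Euler diagram $E(d)=(L,Z)$ and Venn diagram $V(d)=(L,\mathcal Z(L),S)$, and $[\![d]\!]_v=[\![E(d)]\!]_v\to[\![V(d)]\!]_v$. Compound diagrams are built from unitary ones with $\wedge,\vee,\to$, interpreted by meet, join and Heyting implication. A sequent $\Gamma\Rightarrow\Delta$ (finite multisets of compound diagrams) is valid iff for every Heyting algebra and valuation $v$, $\bigwedge_{D\in\Gamma}[\![D]\!]_v\le\bigvee_{E\in\Delta}[\![E]\!]_v$. *)

From HB Require Import structures.
From mathcomp Require Import all_boot all_order.
From mathcomp Require Import finmap.
Set Implicit Arguments. Unset Strict Implicit. Unset Printing Implicit Defensive.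
Import Order.TTheory.
Local Open Scope order_scope.

(* A zone z over L is determined by in(z) ⊆ L (out(z) = L \ in(z)), so we
   represent zones over L as z : {set L}; the set Z(L) of all zones over L is
   the whole finite type {set L}. *)

Definition zones (L : {fset nat}) := {set L}.

Inductive unitary : Type :=
  | Venn (L : {fset nat}) (S : {set zones L})              (* (L, Z(L), S): shaded S *)
  | Euler (L : {fset nat}) (Z : {set zones L})             (* (L, Z): visible zones Z *)
  | EulerVenn (L : {fset nat}) (Z S : {set zones L}).

Definition wf_unitary (u : unitary) : bool :=
  match u with
  | EulerVenn L Z Sh => Sh \subset Z
  | _ => true
  end.

Definition E_of (L : {fset nat}) (Z : {set zones L}) : unitary := Euler Z.
Definition V_of (L : {fset nat}) (S : {set zones L}) : unitary := Venn S.

Inductive diagram : Type :=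
  | DUnit of unitary
  | DAnd of diagram & diagram
  | DOr of diagram & diagram
  | DImp of diagram & diagram.

Fixpoint wf_diagram (D : diagram) : bool :=
  match D with
  | DUnit u => wf_unitary u
  | DAnd D1 D2 | DOr D1 D2 | DImp D1 D2 => wf_diagram D1 && wf_diagram D2
  end.

Definition heyting_imp (disp : Order.disp_t) (H : tbDistrLatticeType disp)
  (imp : H -> H -> H) : Prop :=
  forall a b c : H, (c `&` a <= b) <-> (c <= imp a b).

Section Semantics.
Context {disp : Order.disp_t} (H : tbDistrLatticeType disp)
        (imp : H -> H -> H) (v : nat -> H).

Definition hneg (a : H) : H := imp a \bot.

Definition zone_val (L : {fset nat}) (z : zones L) : H :=
  (\meet_(c : L | c \in z) v (val c)) `&` (\meet_(c : L | c \notin z) hneg (v (val c))).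

Definition zone_m (L : {fset nat}) (z : zones L) : H :=
  imp (\meet_(c : L | c \in z) v (val c)) (\join_(c : L | c \notin z) v (val c)).

Definition sem_venn (L : {fset nat}) (S : {set zones L}) : H :=
  \join_(z in S) zone_val z.

Definition sem_euler (L : {fset nat}) (Z : {set zones L}) : H :=
  \meet_(z | z \notin Z) zone_m z.

Definition sem_unitary (u : unitary) : H :=
  match u with
  | Venn L Sh => sem_venn Sh
  | Euler L Z => sem_euler Z
  | EulerVenn L Z Sh => imp (sem_euler Z) (sem_venn Sh)
  end.

Fixpoint sem (D : diagram) : H :=
  match D with
  | DUnit u => sem_unitary u
  | DAnd D1 D2 => sem D1 `&` sem D2
  | DOr D1 D2 => sem D1 `|` sem D2
  | DImp D1 D2 => imp (sem D1) (sem D2)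
  end.

End Semantics.

(* Sequents Γ ⇒ Δ with Γ, Δ finite multisets (lists) of compound diagrams. *)
Definition valid (Gamma Delta : seq diagram) : Prop :=
  forall (disp : Order.disp_t) (H : tbDistrLatticeType disp)
         (imp : H -> H -> H) (v : nat -> H),
    heyting_imp imp ->
    \meet_(D <- Gamma) sem imp v D <= \join_(E <- Delta) sem imp v E.

(* Semantically an Euler–Venn diagram d is the Heyting implication E(d) → V(d).
   Modus ponens gives d ⊓ E(d) ≤ V(d), so (detL) is a cut on E(d) followed by
   the second premiss; (detR) is the residuation law c ⊓ a ≤ b ⇔ c ≤ a → b,
   after which d may be added to any succedent. *)
From mathcomp Require Import all_boot all_order finmap.
Import Order.TTheory.
Local Open Scope order_scope.

Section HeytingImplication.
Context {disp : Order.disp_t} {H : tbDistrLatticeType disp} {imp : H -> H -> H}.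
Hypothesis imp_adj : heyting_imp imp.

Lemma meet_impl (a b : H) : imp a b `&` a <= b.
Proof. exact/imp_adj. Qed.

Lemma imp_cut_meet (a b c d : H) :
  imp a b `&` c <= a -> b `&` c <= d -> imp a b `&` c <= d.
Proof.
move=> le_a le_b; apply: le_trans le_b; rewrite lexI leIr andbT.
by apply: le_trans (meet_impl a b); rewrite lexI leIl.
Qed.

Lemma le_impl_meet (a b c : H) : a `&` c <= b -> c <= imp a b.
Proof. by move=> le_b; apply/imp_adj; rewrite meetC. Qed.

End HeytingImplication.

Lemma le_bigjoin_rcons {disp : Order.disp_t} {H : tbLatticeType disp}
    {I : Type} (r : seq I) (x : I) (F : I -> H) :
  F x <= \join_(i <- rcons r x) F i.
Proof. by rewrite big_rcons leUr. Qed.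

Theorem lemma9 (L : {fset nat}) (Z S : {set zones L})
  (Gamma Delta : seq diagram) :
  S \subset Z ->
  all wf_diagram Gamma -> all wf_diagram Delta ->
  (* (detL) *)
  (valid (DUnit (EulerVenn Z S) :: Gamma) [:: DUnit (E_of Z)] ->
   valid (DUnit (V_of S) :: Gamma) Delta ->
   valid (DUnit (EulerVenn Z S) :: Gamma) Delta)
  /\
  (* (detR) *)
  (valid (DUnit (E_of Z) :: Gamma) [:: DUnit (V_of S)] ->
   valid Gamma (rcons Delta (DUnit (EulerVenn Z S)))).
Proof.
move=> _ _ _; split.
- move=> premE premV disp H imp v imp_adj.
  have := premV disp H imp v imp_adj; have := premE disp H imp v imp_adj.
  rewrite big_seq1 !big_cons.
  exact: (imp_cut_meet imp_adj).
- move=> premEV disp H imp v imp_adj.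
  apply: le_trans _ (le_bigjoin_rcons _ _ _) => /=.
  apply: (le_impl_meet imp_adj).
  by have := premEV disp H imp v imp_adj; rewrite big_seq1 big_cons.
Qed.
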